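(* Let $n,m$ be positive integers with $m$ even. If $n$ and $m$ are sufficiently large, then the zero-error (Las Vegas) randomized query complexity of $g_{n,m}$ satisfies $R_0(g_{n,m})=\Omega(nm)$.
   Context: Let $n,m$ be positive integers with $m$ even, $M=[n]\times[m]$ (a grid of cells with $n$ rows and $m$ columns), $\tilde M = M\cup\{\bot\}$ (pointers to cells, $\bot$ is the null pointer). Let $T$ be the following fixed binary tree with $m$ leaves and $m-1$ internal nodes: if $m=2^k$, $T$ is the complete binary tree with $2^k$ leaves; if $2^k<m<2^{k+1}$, take the complete binary tree with $2^k$ leaves and add a pair of children to each of its $m-2^k$ leftmost leaves. Outgoing arcs of internal nodes are labeled 'left' and 'right', leaves are labeled $1,\dots,m$ from left to right, and $T(j)$ is the sequence of 'left'/'right' labels on the root-to-leaf-$j$ path. The input alphabet is $\Sigma=\{0,1\}\times\tilde M\times\tilde M\times\tilde M$; for $v\in\Sigma$ its components are $\mathrm{val}(v),\mathrm{lpoint}(v),\mathrm{rpoint}(v),\mathrm{bpoint}(v)$. The function $g_{n,m}\colon\Sigma^M\to\{0,1\}$ is defined by $g_{n,m}(x)=1$ iff: (1) there is exactly one column $b\in[m]$ with $\mathrm{val}(x_{i,b})=1$ for all $i\in[n]$ (the marked column); (2) in column $b$ there is a unique cell $a$ with $x_a\ne(1,\bot,\bot,\bot)$ (the special element); (3) for each column $j\in[m]\setminus\{b\}$, the path starting at $a$ and following $\mathrm{lpoint},\mathrm{rpoint}$ as specified by $T(j)$ exists (no pointer on it is $\bot$) and ends in a cell $\ell_j$ in column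 $j$ with $\mathrm{val}(x_{\ell_j})=0$; (4') the set $G=\{j\in[m]\setminus\{b\} : \mathrm{bpoint}(x_{\ell_j})=a\}$ has size exactly $m/2$. A query asks for the value $x_c\in\Sigma$ of one cell $c\in M$. $R_0(f)$ is the minimum, over randomized decision trees (distributions over deterministic decision trees) all of whose trees in the support compute $f$, of the maximum over inputs of the expected number of queries. *)

From HB Require Import structures.
From mathcomp Require Import all_boot all_order all_algebra.
From mathcomp Require Import reals.
From Stdlib Require List.
Set Implicit Arguments. Unset Strict Implicit. Unset Printing Implicit Defensive.
Import Order.TTheory GRing.Theory Num.Theory.

Inductive btree := BLeaf | BNode of btree & btree.

Fixpoint complete_tree (k : nat) : btree :=
  if k is k'.+1 then BNode (complete_tree k') (complete_tree k') else BLeaf.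

(* add a pair of children to each of the r leftmost leaves; returns the new
   tree and the number of splits still to perform *)
Fixpoint split_left (r : nat) (t : btree) : btree * nat :=
  match t with
  | BLeaf => if r is r'.+1 then (BNode BLeaf BLeaf, r') else (BLeaf, 0)
  | BNode l rt =>
      let (l', r1) := split_left r l in
      let (rt', r2) := split_left r1 rt in (BNode l' rt', r2)
  end.

(* T for m leaves: with k = floor(log2 m), the complete tree with 2^k leaves
   where the m - 2^k leftmost leaves get two children *)
Definition Ttree (m : nat) : btree :=
  let k := trunc_log 2 m in (split_left (m - 2 ^ k) (complete_tree k)).1.

(* root-to-leaf label sequences, leaves listed from left to right;
   false = 'left', true = 'right' *)
Fixpoint leaf_paths (t : btree) : seq (seq bool) :=
  match t with
  | BLeaf => [:: [::]]
  | BNode l r => map (cons false) (leaf_paths l) ++ map (cons true) (leaf_paths r)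
  end.

(* T(j) for the column j : 'I_m (0-indexed column j is leaf j+1) *)
Definition Tpath (m : nat) (j : nat) : seq bool := nth [::] (leaf_paths (Ttree m)) j.

Definition cell (n m : nat) : finType := ('I_n * 'I_m)%type.
Definition Sigma (n m : nat) : finType :=
  (bool * option (cell n m) * option (cell n m) * option (cell n m))%type.
Definition input (n m : nat) : finType := {ffun cell n m -> Sigma n m}.

Section Components.
Variables n m : nat.
Definition sval (v : Sigma n m) : bool := v.1.1.1.
Definition lpoint (v : Sigma n m) : option (cell n m) := v.1.1.2.
Definition rpoint (v : Sigma n m) : option (cell n m) := v.1.2.
Definition bpoint (v : Sigma n m) : option (cell n m) := v.2.
Definition trivial_entry : Sigma n m := (true, None, None, None).

(* follow lpoint/rpoint according to a label sequence; None if some pointer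
   on the path is the null pointer *)
Fixpoint follow (x : input n m) (c : option (cell n m)) (p : seq bool)
  : option (cell n m) :=
  match p with
  | [::] => c
  | d :: p' =>
      match c with
      | None => None
      | Some c0 => follow x (if d then rpoint (x c0) else lpoint (x c0)) p'
      end
  end.

Definition marked (x : input n m) (b : 'I_m) : bool := [forall i, sval (x (i, b))].

(* ell_j : the end of the T(j)-path from the special element a *)
Definition ell (x : input n m) (a : cell n m) (j : 'I_m) : option (cell n m) :=
  follow x (Some a) (Tpath m j).

Definition path_ok (x : input n m) (a : cell n m) (j : 'I_m) : bool :=
  if ell x a j is Some l then (l.2 == j) && ~~ sval (x l) else false.

Definition Gset (x : input n m) (a : cell n m) (b : 'I_m) : {set 'I_m} :=
  [set j | (j != b) &&
     (if ell x a j is Some l then bpoint (x l) == Some a else false)].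

Definition g (x : input n m) : bool :=
  [exists b : 'I_m, [exists a : 'I_n,
    [&& marked x b,
        [forall b' : 'I_m, marked x b' ==> (b' == b)],
        x (a, b) != trivial_entry,
        [forall i : 'I_n, (i != a) ==> (x (i, b) == trivial_entry)],
        [forall j : 'I_m, (j != b) ==> path_ok x (a, b) j]
      & #|Gset x (a, b) b| == m./2]]].
End Components.

Inductive dtree (I A : Type) :=
  | DLeaf of bool
  | DQuery of I & (A -> dtree I A).
Arguments DLeaf {I A}.
Arguments DQuery {I A}.

Fixpoint dt_eval (I A : Type) (t : dtree I A) (x : I -> A) : bool :=
  match t with
  | DLeaf b => b
  | DQuery c k => dt_eval (k (x c)) x
  end.

Fixpoint dt_cost (I A : Type) (t : dtree I A) (x : I -> A) : nat :=
  match t with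
  | DLeaf _ => 0
  | DQuery c k => (dt_cost (k (x c)) x).+1
  end.

Local Open Scope ring_scope.

(* randomized decision tree: a (finitely supported) probability distribution
   over deterministic decision trees *)
Record rdtree (R : realType) (I A : Type) := RDTree {
  rdt_supp : seq (R * dtree I A);
  rdt_nonneg : forall p, List.In p rdt_supp -> 0 <= p.1;
  rdt_sum1 : \sum_(p <- rdt_supp) p.1 = 1 }.

Definition zero_error (R : realType) (I : finType) (A : finType)
  (D : rdtree R I A) (f : {ffun I -> A} -> bool) : Prop :=
  forall p, List.In p (rdt_supp D) -> 0 < p.1 ->
    forall x : {ffun I -> A}, dt_eval p.2 x = f x.

Definition expected_cost (R : realType) (I : finType) (A : finType)
  (D : rdtree R I A) (x : {ffun I -> A}) : R :=
  \sum_(p <- rdt_supp D) p.1 * (dt_cost p.2 x)%:R.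

From HB Require Import structures.
From mathcomp Require Import all_boot all_order all_algebra.
From mathcomp Require Import reals zify.
Import Order.TTheory GRing.Theory Num.Theory.
Set Implicit Arguments. Unset Strict Implicit. Unset Printing Implicit Defensive.

(* Yao's principle with the uniform distribution on the inputs having exactly
   one zero cell in each column and all other cells (1, _|_, _|_, _|_); g is 0 on
   all of them.  If a correct deterministic tree, on such an input, misses the
   zero a of some column j after fewer than m (n/8) queries, then unqueried
   cells remain in at least m/2 other columns and at least 4m cells off column
   j; with them one builds an input that agrees on every queried cell, has a as
   special element, realizes T with spare cells as internal nodes, and points
   m/2 leaves back to a, so g = 1 there: a contradiction.  Hence either every
   zero is found or the cost is at least m n/8.  Finding the zero of column j
   costs about n/8 queries in that column on average over its row, because up
   to that moment the tree runs as on the input where column j has no zero.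
   Summing over the columns gives an average cost of at least n m/64. *)

Lemma leaf_paths_neq0 t : leaf_paths t != [::].
Proof. by elim: t => [|l IHl r _] //=; case: (leaf_paths l) IHl. Qed.

Lemma uniq_leaf_paths t : uniq (leaf_paths t).
Proof.
elim: t => [|l IHl r IHr] //=.
rewrite cat_uniq !map_inj_uniq ?IHl ?IHr //=; try by move=> ? ? [].
rewrite andbT; apply/hasPn => _ /mapP [q _ ->]; by apply/mapP => [[]].
Qed.

Lemma leaf_paths_prefix_free t p q : p \in leaf_paths t -> q \in leaf_paths t ->
  take (size q) p = q -> q = p.
Proof.
elim: t p q => [|l IHl r IHr] p q /=; first by rewrite !inE => /eqP -> /eqP ->.
rewrite !mem_cat => /orP [] /mapP [p' Hp' ->] /orP [] /mapP [q' Hq' ->] //= [].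
- by move/(IHl _ _ Hp' Hq') ->.
- by move/(IHr _ _ Hp' Hq') ->.
Qed.

Lemma leaf_path_gt0 t p : 1 < size (leaf_paths t) -> p \in leaf_paths t ->
  0 < size p.
Proof. by case: t => //= l r _; rewrite mem_cat => /orP [] /mapP [q _ ->]. Qed.

Lemma complete_tree_paths k :
  size (leaf_paths (complete_tree k)) = 2 ^ k /\
  all (fun p => size p == k) (leaf_paths (complete_tree k)).
Proof.
elim: k => [|k [Hsize Hall]] //=.
rewrite size_cat !size_map Hsize expnS mul2n addnn all_cat !all_map.
by split=> //; apply/andP; split; apply: sub_all Hall.
Qed.

Lemma size_split_left r t :
  size (leaf_paths (split_left r t).1) = size (leaf_paths t) + minn r (size (leaf_paths t))
  /\ (split_left r t).2 = r - minn r (size (leaf_paths t)).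
Proof.
elim: t r => [|l IHl rt IHr] r /=; first by case: r => [|r] /=; split => //; lia.
move: (IHl r); case: (split_left r l) => l' r1 /= [Hl' Hr1].
move: (IHr r1); case: (split_left r1 rt) => rt' r2 /= [Hrt' Hr2].
rewrite !size_cat !size_map Hl' Hrt' Hr2 Hr1; split; lia.
Qed.

Lemma split_left_depth r t h :
  all (fun p => size p <= h) (leaf_paths t) ->
  all (fun p => size p <= h.+1) (leaf_paths (split_left r t).1).
Proof.
elim: t r h => [|l IHl rt IHr] r h /=; first by case: r.
case: h => [|h]; rewrite all_cat !all_map => /andP [Hl Hrt].
  by move: Hl (leaf_paths_neq0 l); case: (leaf_paths l).
move: (IHl r h Hl); case: (split_left r l) => l' r1 /= Hl'.
move: (IHr r1 h Hrt); case: (split_left r1 rt) => rt' r2 /= Hrt'.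
by rewrite all_cat !all_map Hl' Hrt'.
Qed.

Lemma size_Ttree m : 0 < m -> size (leaf_paths (Ttree m)) = m.
Proof.
move=> m_gt0; rewrite /Ttree.
have := trunc_logP (isT : 1 < 2) m_gt0; have := trunc_log_ltn m (isT : 1 < 2).
set k := trunc_log 2 m; rewrite expnS => Hlt Hle.
have [-> _] := size_split_left (m - 2 ^ k) (complete_tree k).
have [-> _] := complete_tree_paths k; lia.
Qed.

Lemma Ttree_depth m p : 0 < m -> p \in leaf_paths (Ttree m) -> 2 ^ size p <= 2 * m.
Proof.
move=> m_gt0; rewrite /Ttree; have := trunc_logP (isT : 1 < 2) m_gt0.
set k := trunc_log 2 m => Hk Hp.
have [_ Hall] := complete_tree_paths k.
have Hdepth : all (fun q => size q <= k) (leaf_paths (complete_tree k)).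
  by apply: sub_all Hall => q /eqP ->.
have /allP /(_ p Hp) Hsize := split_left_depth (m - 2 ^ k) Hdepth.
by rewrite -(leq_pmul2l (isT : 0 < 2)) in Hk; apply: leq_trans Hk; rewrite -expnS leq_exp2l.
Qed.

Definition heap_index (u : seq bool) : nat := foldl (fun k (b : bool) => k.*2 + b) 1 u.

Lemma heap_index_nil : heap_index [::] = 1.
Proof. by []. Qed.

Lemma heap_index_rcons u b : heap_index (rcons u b) = (heap_index u).*2 + b.
Proof. by rewrite /heap_index foldl_rcons. Qed.

Lemma heap_index_gt0 u : 0 < heap_index u.
Proof. by elim/last_ind: u => [|u b IH] //; rewrite heap_index_rcons; lia. Qed.

Lemma heap_index_lt u : heap_index u < 2 ^ (size u).+1.
Proof.
elim/last_ind: u => [|u b IH] //.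
by rewrite heap_index_rcons size_rcons expnS; case: b => /=; lia.
Qed.

Lemma heap_index_inj : injective heap_index.
Proof.
elim/last_ind => [|u b IH] v; case/lastP: v => [|v b'] //;
  rewrite ?heap_index_nil ?heap_index_rcons.
- by have := heap_index_gt0 v; case: b' => /=; lia.
- by have := heap_index_gt0 u; case: b => /=; lia.
move=> E; have Eb : b = b' by case: b b' E => [] [] //=; lia.
by subst b'; rewrite (IH v) //; case: b E => /=; lia.
Qed.

Fixpoint queries (I A : Type) (t : dtree I A) (x : I -> A) : seq I :=
  if t is DQuery c k then c :: queries (k (x c)) x else [::].

Lemma dt_cost_queries I A (t : dtree I A) x : dt_cost t x = size (queries t x).
Proof. by elim: t => [b|c k IH] //=; rewrite IH. Qed.

Lemma eq_dt_eval_queries (I : eqType) A (t : dtree I A) (x y : I -> A) :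
  {in queries t x, y =1 x} -> dt_eval t y = dt_eval t x.
Proof.
elim: t => [b|c k IH] //= Hxy.
by rewrite Hxy ?mem_head //; apply: IH => d Hd; rewrite Hxy // inE Hd orbT.
Qed.

Lemma queries_until_diff (I : eqType) A (t : dtree I A) (x y : I -> A) (c : I) :
  (forall d, d != c -> x d = y d) ->
  let qx := queries t x in let qy := queries t y in
  take (index c qx) qx = take (index c qy) qy /\ (c \in qx) = (c \in qy).
Proof.
move=> Hxy; elim: t => [b|d k IH] //=.
have [->|Hdc] := eqVneq d c; first by rewrite !mem_head.
rewrite (Hxy d Hdc) !inE eq_sym (negbTE Hdc) /=.
by have [-> ->] := IH (y d).
Qed.

Lemma index_filter (T : eqType) (p : pred T) (c : T) (s : seq T) :
  p c -> index c (filter p s) = count p (take (index c s) s).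
Proof.
move=> pc; elim: s => [|d s IH] //=.
have [->|Hdc] := eqVneq d c; first by rewrite pc /= eqxx.
by rewrite /=; case: (p d); rewrite /= ?(negbTE Hdc) IH.
Qed.

Lemma follow_rcons n m (x : input n m) c u b :
  follow x c (rcons u b) =
  if follow x c u is Some d then (if b then rpoint (x d) else lpoint (x d)) else None.
Proof. by elim: u c => [|b' u IH] [d|] //=; case: b. Qed.

Section HardInputs.
Variables n m : nat.

Definition zero_entry : Sigma n m := (false, None, None, None).

Definition zero_pattern (zo : {ffun 'I_m -> option 'I_n}) : input n m :=
  [ffun c : cell n m => if zo c.2 == Some c.1 then zero_entry else trivial_entry n m].

Definition hard_input (z : {ffun 'I_m -> 'I_n}) : input n m :=
  zero_pattern [ffun j => Some (z j)].

Lemma hard_inputE z (c : cell n m) :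
  hard_input z c = if z c.2 == c.1 then zero_entry else trivial_entry n m.
Proof. by rewrite !ffunE. Qed.

Lemma g_hard_input z : g (hard_input z) = false.
Proof.
apply/negbTE/existsPn => b; apply/existsPn => a; apply/negP => /andP [/forallP].
by move/(_ (z b)); rewrite hard_inputE eqxx.
Qed.

End HardInputs.

Section FoolingInput.
Variables (n m : nat) (t : dtree (cell n m) (Sigma n m)).
Variables (z : {ffun 'I_m -> 'I_n}) (j : 'I_m).
Hypotheses (n_ge8 : 8 <= n) (m_ge8 : 8 <= m).

Let x := hard_input z.
Let Q := queries t x.
Let a : cell n m := (z j, j).
Hypothesis a_unqueried : a \notin Q.
Hypothesis few_queries : size Q < m * (n %/ 8).

Let open_cols := [set j' : 'I_m | (j' != j) && [exists i, (i, j') \notin Q]].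
Let back_cols := take m./2 (enum open_cols).
Let open_row (j' : 'I_m) : 'I_n := odflt (z j') [pick i | (i, j') \notin Q].
Let leaf_cell (j' : 'I_m) : cell n m :=
  if j' \in back_cols then (open_row j', j') else (z j', j').
Let leaf_cells := [set leaf_cell j' | j' : 'I_m].
Let spare_pool := [set c : cell n m | [&& c.2 != j, c \notin Q & c \notin leaf_cells]].
Let spare := take (4 * m) (enum spare_pool).
Let leaf_codes := map heap_index (leaf_paths (Ttree m)).

(* The node of T with heap index M is realized by the cell [node_cell M]: the
   leaf of column j' by [leaf_cell j'], an internal node by the M-th spare cell. *)
Let node_cell (M : nat) : cell n m :=
  if M \in leaf_codes then
    (if insub (index M leaf_codes) is Some j' then leaf_cell j' else a)
  else nth a spare M.

Let fooling : input n m := [ffun c : cell n m =>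
  if c == a then (true, Some (node_cell 2), Some (node_cell 3), None)
  else if c \in spare then
    (false, Some (node_cell (index c spare).*2), Some (node_cell (index c spare).*2.+1), None)
  else if (c.2 \in back_cols) && (c == leaf_cell c.2) then (false, None, None, Some a)
  else x c].

Let few_queries_times8 : size Q * 8 < m * n.
Proof.
apply: leq_trans (_ : m * (n %/ 8) * 8 <= _); first by rewrite ltn_mul2r.
by rewrite -mulnA leq_mul2l leq_divM orbT.
Qed.

Let card_setQ : #|[set c | c \in Q]| <= size Q.
Proof. by rewrite cardsE card_size. Qed.

Lemma open_cols_card : m./2 <= #|open_cols|.
Proof.
set full := [set j' : 'I_m | [forall i, (i, j') \in Q]].
have full_Q : #|full| * n <= size Q.
  have : setX [set: 'I_n] full \subset [set c | c \in Q].
    by apply/subsetP => c; rewrite !inE /= => /forallP /(_ c.1); rewrite -surjective_pairing.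
  move/subset_leq_card/leq_trans/(_ (card_setQ)).
  by rewrite cardsX cardsT card_ord mulnC.
have : [set~ j] :\: full \subset open_cols.
  by apply/subsetP => j'; rewrite !inE negb_forall => /andP [-> ->].
move/subset_leq_card; rewrite cardsD cardsC1 card_ord.
have := subset_leq_card (subsetIr [set~ j] full).
have : #|full| * n * 8 < m * n.
  by apply: leq_ltn_trans few_queries_times8; rewrite leq_mul2r full_Q orbT.
nia.
Qed.

Lemma spare_pool_card : 4 * m <= #|spare_pool|.
Proof.
set off_col := [set c : cell n m | c.2 != j].
have : off_col :\: [set c | c \in Q] :\: leaf_cells \subset spare_pool.
  by apply/subsetP => c; rewrite !inE => /and3P [-> -> ->].
move/subset_leq_card; rewrite !cardsD.
have -> : #|off_col| = n * m - n.
  have -> : off_col = setX [set: 'I_n] [set~ j] by apply/setP => c; rewrite !inE.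
  by rewrite cardsX cardsT cardsC1 !card_ord -subn1 mulnBr muln1.
have HL := leq_trans (subset_leq_card (subsetIr (off_col :\: [set c | c \in Q]) leaf_cells))
  (leq_imset_card leaf_cell 'I_m).
have HQ := leq_trans (subset_leq_card (subsetIr off_col [set c | c \in Q])) card_setQ.
rewrite card_ord in HL.
have Hn : 8 * m <= n * m by rewrite leq_mul2r n_ge8 orbT.
have Hm : n * 8 <= n * m by rewrite leq_mul2l m_ge8 orbT.
move: few_queries_times8 HL HQ Hn Hm; rewrite [m * n]mulnC; move: (n * m) => P.
lia.
Qed.

Lemma size_back_cols : size back_cols = m./2.
Proof. by rewrite size_take -cardE; have := open_cols_card; case: ltnP; lia. Qed.

Lemma size_spare : size spare = 4 * m.
Proof. by rewrite size_take -cardE; have := spare_pool_card; case: ltnP; lia. Qed.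

Lemma uniq_spare : uniq spare.
Proof. exact/take_uniq/enum_uniq. Qed.

Lemma back_colsP j' : j' \in back_cols -> j' != j /\ (open_row j', j') \notin Q.
Proof.
move/mem_take; rewrite mem_enum inE => /andP [-> /existsP [i Hi]]; split=> //.
by rewrite /open_row; case: pickP => [//|/(_ i)]; rewrite Hi.
Qed.

Lemma spareP c : c \in spare -> [/\ c.2 != j, c \notin Q & c \notin leaf_cells].
Proof. by move/mem_take; rewrite mem_enum inE => /and3P. Qed.

Lemma leaf_cell_col j' : (leaf_cell j').2 = j'.
Proof. by rewrite /leaf_cell; case: ifP. Qed.

Lemma fooling_queried : {in Q, fooling =1 x}.
Proof.
move=> c cQ; rewrite ffunE.
have [Eca|_] := eqVneq c a; first by move: a_unqueried; rewrite -Eca cQ.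
have [/spareP [_ /negP //]|_] := boolP (c \in spare).
case: ifP => // /andP [Hb /eqP Ec]; have [_] := back_colsP Hb.
by move: cQ; rewrite {1}Ec /leaf_cell Hb => ->.
Qed.

Lemma fooling_leaf_cell j' : j' != j ->
  fooling (leaf_cell j') = if j' \in back_cols then (false, None, None, Some a) else zero_entry n m.
Proof.
move=> Hj'; rewrite ffunE leaf_cell_col eqxx andbT.
have [Ea|_] := eqVneq (leaf_cell j') a.
  by move: (leaf_cell_col j'); rewrite Ea => /= Ej; rewrite Ej eqxx in Hj'.
have [/spareP [_ _ /negP []]|_] := boolP (leaf_cell j' \in spare).
  exact: imset_f.
by case: ifP => // Hb; rewrite /leaf_cell Hb hard_inputE eqxx.
Qed.

Lemma fooling_col i : fooling (i, j) =
  if i == z j then (true, Some (node_cell 2), Some (node_cell 3), None) else trivial_entry n m.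
Proof.
rewrite ffunE /a xpair_eqE eqxx andbT; case: ifP => // Hi.
have [/spareP [] /=|_] := boolP ((i, j) \in spare); first by rewrite eqxx.
have [/back_colsP [] /=|] := boolP (j \in back_cols); first by rewrite eqxx.
by rewrite hard_inputE /= eq_sym Hi.
Qed.

Lemma fooling_internal_node u : heap_index u \notin leaf_codes -> heap_index u < 4 * m ->
  fooling (node_cell (heap_index u)) =
  (false, Some (node_cell (heap_index (rcons u false))),
          Some (node_cell (heap_index (rcons u true))), None).
Proof.
move=> Hleaf Hlt; rewrite /node_cell (negbTE Hleaf) !heap_index_rcons addn0 addn1.
set s := nth a spare _; rewrite -size_spare in Hlt.
have s_spare : s \in spare by apply: mem_nth.
have [Esa|Hsa] := eqVneq s a; first by have [] := spareP s_spare; rewrite Esa eqxx.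
by rewrite ffunE (negbTE Hsa) s_spare index_uniq ?uniq_spare.
Qed.

Lemma follow_fooling_prefix p i : p \in leaf_paths (Ttree m) -> 0 < i <= size p ->
  follow fooling (Some a) (take i p) = Some (node_cell (heap_index (take i p))).
Proof.
move=> Hp; elim: i => [//|[|i] IH] /andP [_ Hi].
  rewrite (take_nth false Hi) take0 /= ffunE eqxx.
  by case: (nth false p 0).
rewrite (take_nth false Hi) follow_rcons IH ?Hi ?(ltnW Hi) //.
set u := take i.+1 p; have size_u : size u = i.+1 by rewrite size_take Hi.
have u_inner : heap_index u \notin leaf_codes.
  apply/mapP => -[q Hq /heap_index_inj Euq].
  have Eqp : q = p by apply: (leaf_paths_prefix_free Hp Hq); rewrite -Euq size_u.
  by move: Hi; rewrite -size_u Euq Eqp ltnn.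
rewrite fooling_internal_node //; first by case: (nth false p i.+1).
apply: leq_trans (heap_index_lt u) _; rewrite size_u.
apply: leq_trans (_ : 2 ^ size p <= _); first by rewrite leq_exp2l.
by have := Ttree_depth (ltac:(lia) : 0 < m) Hp; lia.
Qed.

Lemma ell_fooling j' : ell fooling a j' = Some (leaf_cell j').
Proof.
have size_paths : size (leaf_paths (Ttree m)) = m by apply: size_Ttree; lia.
rewrite /ell /Tpath; set p := nth [::] _ j'.
have Hp : p \in leaf_paths (Ttree m) by apply: mem_nth; rewrite size_paths.
have p_gt0 : 0 < size p by apply: (leaf_path_gt0 _ Hp); rewrite size_paths; lia.
rewrite -(take_size p) follow_fooling_prefix ?p_gt0 ?leqnn // take_size /node_cell map_f //.
by rewrite (index_map heap_index_inj) index_uniq ?uniq_leaf_paths ?size_paths // valK.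
Qed.

Lemma g_fooling : g fooling.
Proof.
have Gset_back_cols : Gset fooling a j = [set j' | j' \in back_cols].
  apply/setP => j'; rewrite !inE ell_fooling.
  have [->|Hj'] := eqVneq j' j.
    by apply/esym/negP => /back_colsP []; rewrite eqxx.
  by rewrite fooling_leaf_cell //; case: ifP => //= _; apply: eqxx.
apply/existsP; exists j; apply/existsP; exists (z j); apply/and5P; split.
- by apply/forallP => i; rewrite fooling_col; case: ifP.
- apply/forallP => b'; apply/implyP => /forallP /(_ (leaf_cell b').1).
  rewrite -{2}(leaf_cell_col b') -surjective_pairing.
  by have [//|Hb'] := eqVneq b' j; rewrite fooling_leaf_cell //; case: ifP.
- by rewrite fooling_col eqxx.
- by apply/forallP => i; apply/implyP => Hi; rewrite fooling_col (negbTE Hi).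
apply/andP; split.
  apply/forallP => j'; apply/implyP => Hj'.
  by rewrite /path_ok ell_fooling leaf_cell_col eqxx fooling_leaf_cell //; case: ifP.
rewrite Gset_back_cols -size_back_cols -(card_uniqP (take_uniq _ (enum_uniq _))).
by apply/eqP/eq_card => j'; rewrite inE.
Qed.

Lemma fooling_input : exists2 y : input n m, g y & dt_eval t y = dt_eval t x.
Proof. by exists fooling; [exact: g_fooling | exact: eq_dt_eval_queries fooling_queried]. Qed.

End FoolingInput.

Lemma unqueried_zero_cost n m (t : dtree (cell n m) (Sigma n m))
    (z : {ffun 'I_m -> 'I_n}) (j : 'I_m) :
  8 <= n -> 8 <= m -> (forall x : input n m, dt_eval t x = g x) ->
  (z j, j) \notin queries t (hard_input z) ->
  m * (n %/ 8) <= size (queries t (hard_input z)).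
Proof.
move=> n_ge8 m_ge8 t_computes_g unqueried; rewrite leqNgt; apply/negP => few.
have [y gy] := fooling_input n_ge8 m_ge8 unqueried few.
by rewrite !t_computes_g g_hard_input gy.
Qed.

Lemma sum_count_col n m (s : seq (cell n m)) :
  \sum_(j < m) count (fun c : cell n m => c.2 == j) s = size s.
Proof.
elim: s => [|c s IH] /=; first by rewrite big1.
rewrite big_split /= IH (bigD1 c.2) //= eqxx big1 ?add1n ?addn0 // => k Hk.
by rewrite eq_sym (negbTE Hk).
Qed.

Definition set_col n m (z : {ffun 'I_m -> 'I_n}) (j : 'I_m) (r : 'I_n) :
  {ffun 'I_m -> 'I_n} := [ffun k => if k == j then r else z k].

Lemma sum_set_col n m (j : 'I_m) (F : {ffun 'I_m -> 'I_n} -> nat) :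
  \sum_(z : {ffun 'I_m -> 'I_n}) \sum_(r < n) F (set_col z j r) =
  n * \sum_(z : {ffun 'I_m -> 'I_n}) F z.
Proof.
pose swap (p : {ffun 'I_m -> 'I_n} * 'I_n) := (set_col p.1 j p.2, p.1 j).
have swapK : involutive swap.
  move=> [z r]; rewrite /swap /set_col /= ffunE eqxx; congr pair.
  by apply/ffunP => k; rewrite !ffunE; case: eqP => [->|].
rewrite pair_big /=.
have -> : \sum_(p : {ffun 'I_m -> 'I_n} * 'I_n) F (set_col p.1 j p.2) =
          \sum_(p : {ffun 'I_m -> 'I_n} * 'I_n) F p.1.
  by rewrite [RHS](reindex_inj (inv_inj swapK)).
rewrite -(pair_big predT predT (fun z (r : 'I_n) => F z)) big_distrr /=.
by apply: eq_bigr => z _; rewrite sum_nat_const card_ord mulnC.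
Qed.

Section SearchCost.
Variables (n m : nat) (t : dtree (cell n m) (Sigma n m)).
Hypothesis t_computes_g : forall x : input n m, dt_eval t x = g x.
Hypotheses (n_ge16 : 16 <= n) (m_ge8 : 8 <= m).

Let L := n %/ 8.
Let col (j : 'I_m) (c : cell n m) := c.2 == j.
Let Q z := queries t (hard_input z).
Let found (j : 'I_m) (z : {ffun 'I_m -> 'I_n}) := (z j, j) \in Q z.
Let search_cost (j : 'I_m) (z : {ffun 'I_m -> 'I_n}) :=
  count (col j) (take (index (z j, j) (Q z)) (Q z)).
Let capped (j : 'I_m) (z : {ffun 'I_m -> 'I_n}) :=
  if found j z then minn (search_cost j z) L else L.

Lemma sum_capped_le z : \sum_(j < m) capped j z <= 2 * size (Q z).
Proof.
have capped_le j : capped j z <= count (col j) (Q z) + (if found j z then 0 else L).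
  rewrite /capped; case: ifP => _; last exact: leq_addl.
  rewrite addn0 geq_min /search_cost; apply/orP; left.
  by rewrite -[X in _ <= count _ X](cat_take_drop (index (z j, j) (Q z))) count_cat leq_addr.
apply: leq_trans (_ : _ <= \sum_(j < m) count (col j) (Q z) +
                          \sum_(j < m) (if found j z then 0 else L)) _.
  by rewrite -big_split; apply: leq_sum => j _; apply: capped_le.
rewrite sum_count_col mul2n -addnn leq_add2l.
have [/forallP all_found|] := boolP [forall j, found j z].
  by rewrite big1 // => j _; rewrite all_found.
have n_ge8 : 8 <= n by apply: leq_trans n_ge16.
rewrite negb_forall => /existsP [j /(unqueried_zero_cost n_ge8 m_ge8 t_computes_g)].
apply: leq_trans; rewrite -[m in m * _]card_ord -sum_nat_const.
by apply: leq_sum => k _; case: ifP.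
Qed.

Lemma sum_capped_set_col z j : (n - L) * L <= \sum_(r < n) capped j (set_col z j r).
Proof.
pose zo : {ffun 'I_m -> option 'I_n} := [ffun k => if k == j then None else Some (z k)].
pose w := filter (col j) (queries t (zero_pattern zo)).
have cheap_rows r : capped j (set_col z j r) < L -> (r, j) \in take L w.
  have zj : set_col z j r j = r by rewrite ffunE eqxx.
  (* Until (r, j) is queried the run is the one on the input without a zero in
     column j, so cheap rows are among its first L queries in column j. *)
  have [] := @queries_until_diff _ _ t (hard_input (set_col z j r)) (zero_pattern zo) (r, j).
    move=> [i k] Hd; rewrite hard_inputE !ffunE /=.
    case: (eqVneq k j) => [Ekj|//]; subst k.
    by move: Hd; rewrite xpair_eqE eqxx andbT eq_sym => /negbTE ->.
  rewrite /capped /found /search_cost zj => -> ->.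
  case: ifP => [w_r|]; last by rewrite ltnn.
  rewrite gtn_min ltnn orbF -index_filter ?/col //= => Hlt.
  by rewrite in_take // mem_filter /col /= eqxx w_r.
set cheap := [set r | capped j (set_col z j r) < L].
have cheap_card : #|cheap| <= L.
  have inj_row : injective (fun r : 'I_n => (r, j)) by move=> r1 r2 [].
  rewrite -(card_imset cheap inj_row).
  apply: leq_trans (_ : #|[set c | c \in take L w]| <= _).
    apply/subset_leq_card/subsetP => _ /imsetP [r r_cheap ->].
    by rewrite inE; apply: cheap_rows; rewrite inE in r_cheap.
  by rewrite cardsE (leq_trans (card_size _)) // size_take_min geq_minl.
apply: leq_trans (_ : \sum_(r in ~: cheap) L <= _).
  by rewrite sum_nat_const cardsCs setCK card_ord leq_mul2r leq_sub2l ?cheap_card ?orbT.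
by rewrite big_mkcond; apply: leq_sum => r _; rewrite !inE -leqNgt; case: ifP.
Qed.

Lemma quarter_square_le : n * n <= 32 * ((n - L) * L).
Proof.
have := leq_divM n 8; have := ltn_ceil n (isT : 0 < 8).
rewrite -/L => Hlt Hle; have le_n : n <= 2 * (n - L) by lia.
apply: leq_trans (leq_mul le_n (_ : n <= 16 * L)) _; first by lia.
by rewrite mulnCA !mulnA.
Qed.

Lemma hard_inputs_total_cost :
  #|{ffun 'I_m -> 'I_n}| * (n * m) <= 64 * \sum_(z : {ffun 'I_m -> 'I_n}) size (Q z).
Proof.
set Z := #|{ffun 'I_m -> 'I_n}|; set C := \sum_z size (Q z).
have sum_capped : \sum_(j < m) \sum_z capped j z <= 2 * C.
  rewrite exchange_big /= /C big_distrr /=; apply: leq_sum => z _; exact: sum_capped_le.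
have col_capped j : Z * ((n - L) * L) <= n * \sum_z capped j z.
  rewrite -(sum_set_col j) -sum_nat_const; apply: leq_sum => z _; exact: sum_capped_set_col.
have : m * (Z * ((n - L) * L)) <= n * (2 * C).
  apply: leq_trans (leq_mul (leqnn n) sum_capped); rewrite big_distrr /=.
  by rewrite -[m in m * _]card_ord -sum_nat_const; apply: leq_sum => j _; apply: col_capped.
have := quarter_square_le; move: ((n - L) * L) => X.
rewrite -(leq_pmul2r (leq_trans (isT : 0 < 16) n_ge16)); nia.
Qed.

End SearchCost.

Local Open Scope ring_scope.

Lemma ler_sum_In (R : numDomainType) (T : Type) (s : seq T) (F G : T -> R) :
  (forall p, List.In p s -> F p <= G p) -> \sum_(p <- s) F p <= \sum_(p <- s) G p.
Proof.
elim: s => [|p s IH] FG; first by rewrite !big_nil.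
by rewrite !big_cons lerD ?FG ?IH //; [left | move=> q Hq; apply: FG; right].
Qed.

Lemma exists_ge_mean (R : realDomainType) (T : finType) (F : T -> R) (c : R) :
  (0 < #|T|)%N -> #|T|%:R * c <= \sum_x F x -> exists x, c <= F x.
Proof.
move=> /card_gt0P [x0 _] Hsum.
have [/existsP //|/existsPn small] := boolP [exists x, c <= F x].
suff : \sum_x F x < #|T|%:R * c by rewrite ltNge Hsum.
rewrite -sum1_card natr_sum mulr_suml; apply: ltr_sum => [|x _].
  by apply/hasP; exists x0; rewrite ?mem_index_enum.
by rewrite mul1r ltNge small.
Qed.

Lemma hard_inputs_expected_cost (R : realType) n m (D : rdtree R (cell n m) (Sigma n m)) :
  zero_error D (@g n m) -> (16 <= n)%N -> (8 <= m)%N ->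
  #|{ffun 'I_m -> 'I_n}|%:R * (64%:R^-1 * (n * m)%:R) <=
  \sum_(z : {ffun 'I_m -> 'I_n}) expected_cost D (hard_input z).
Proof.
move=> D_zero_error n_ge16 m_ge8; rewrite /expected_cost exchange_big /=.
set bound := _ * _.
have -> : bound = \sum_(p <- rdt_supp D) p.1 * bound by rewrite -mulr_suml rdt_sum1 mul1r.
apply: ler_sum_In => p Hp; rewrite -mulr_sumr.
have := rdt_nonneg Hp; rewrite le0r => /orP [/eqP ->|p_pos]; first by rewrite !mul0r.
apply: ler_wpM2l; first exact: ltW.
rewrite /bound mulrCA ler_pdivrMl ?ltr0n // -natr_sum -natrM -(natrM _ 64) ler_nat.
under eq_bigr => z _ do rewrite dt_cost_queries.
exact: hard_inputs_total_cost (D_zero_error p Hp p_pos) n_ge16 m_ge8.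
Qed.

Theorem theorem8 (R : realType) :
  exists c : R, 0 < c /\
  exists N : nat, forall n m : nat,
    (0 < n)%N -> (0 < m)%N -> ~~ odd m -> (N <= n)%N -> (N <= m)%N ->
    forall D : rdtree R (cell n m) (Sigma n m),
      zero_error D (@g n m) ->
      exists x : input n m, c * (n * m)%:R <= expected_cost D x.
Proof.
exists 64%:R^-1; split; first by rewrite invr_gt0 ltr0n.
exists 16%N => n m n_gt0 _ _ n_ge16 m_ge16 D D_zero_error.
have m_ge8 : (8 <= m)%N by apply: leq_trans m_ge16.
have [|z Hz] := exists_ge_mean _ (hard_inputs_expected_cost D_zero_error n_ge16 m_ge8).
  by rewrite card_ffun card_ord expn_gt0 n_gt0.
by exists (hard_input z).
Qed.
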